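(* Let $\kappa_1>0$, $\kappa_2<0$ and $\gamma=-\kappa_2/\kappa_1$. Let $M$ be the set of all minimum points of $H_2(\mathbf{x},\mathbf{y})=-2\kappa_1\kappa_2G(\mathbf{x},\mathbf{y})+\kappa_1^2h(\mathbf{x},\mathbf{x})+\kappa_2^2h(\mathbf{y},\mathbf{y})$, $\mathbf{x},\mathbf{y}\in D$, $\mathbf{x}\ne\mathbf{y}$. Then there exist $p\in(0,1)$ and $q\in(-1,0)$ depending only on $\gamma$ such that $M=\{(P,Q)\in D\times D: P=p(\cos\theta,\sin\theta),\ Q=q(\cos\theta,\sin\theta),\ \theta\in[0,2\pi)\}$. If $\gamma=1$, then $p=-q=\sqrt{\sqrt5-2}$.
   Context: $D=\{\mathbf{x}\in\mathbb{R}^2:|\mathbf{x}|<1\}$. $G(\mathbf{x},\mathbf{y})=\frac1{2\pi}\ln\frac1{|\mathbf{x}-\mathbf{y}|}-h(\mathbf{x},\mathbf{y})$ is the Dirichlet Green's function of $-\Delta$ in $D$, where $h(\mathbf{x},\mathbf{y})=-\frac1{2\pi}\ln|\mathbf{y}|-\frac1{2\pi}\ln\left|\mathbf{x}-\frac{\mathbf{y}}{|\mathbf{y}|^2}\right|$. *)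

From Stdlib Require Import Reals.
Open Scope R_scope.

Definition pt := (R * R)%type.

Definition norm2 (x : pt) : R := sqrt (fst x ^ 2 + snd x ^ 2).

Definition psub (x y : pt) : pt := (fst x - fst y, snd x - snd y).
Definition pscale (c : R) (x : pt) : pt := (c * fst x, c * snd x).

Definition inD (x : pt) : Prop := norm2 x < 1.

(* regular part h(x,y) = -1/(2pi) ln|y| - 1/(2pi) ln|x - y/|y|^2|,
   for y <> 0; at y = 0 we use its continuous extension h(x,0) = 0. *)
Definition h0 (x y : pt) : R :=
  - / (2 * PI) * ln (norm2 y)
  - / (2 * PI) * ln (norm2 (psub x (pscale (/ (norm2 y ^ 2)) y))).

Definition h (x y : pt) : R :=
  if Req_EM_T (fst y) 0 then (if Req_EM_T (snd y) 0 then 0 else h0 x y) else h0 x y.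

Definition G (x y : pt) : R :=
  / (2 * PI) * ln (/ norm2 (psub x y)) - h x y.

Definition H2 (k1 k2 : R) (x y : pt) : R :=
  - 2 * k1 * k2 * G x y + k1 ^ 2 * h x x + k2 ^ 2 * h y y.

Definition is_min_point (k1 k2 : R) (x y : pt) : Prop :=
  inD x /\ inD y /\ x <> y /\
  forall x' y' : pt, inD x' -> inD y' -> x' <> y' -> H2 k1 k2 x y <= H2 k1 k2 x' y'.

From Stdlib Require Import Reals Lra.
From Coquelicot Require Import Coquelicot.
Open Scope R_scope.

(* Put g = -k2/k1 > 0.  On pairs of distinct points of D, H2 is a positive multiple of
     g ln (1 + (1 - |P|^2) (1 - |Q|^2) / |P - Q|^2) - ln (1 - |P|^2) - g^2 ln (1 - |Q|^2).
   For fixed radii a = |P|, b = |Q| this is smallest exactly when P and Q are on opposite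
   sides of the origin, i.e. |P - Q| = a + b, where it equals
     -2 g ln T - ln (1 - a^2) - g^2 ln (1 - b^2),   T = (a + b) / (1 + a b).
   In the variable u = ln ((1 + x) / (1 - x)) the map (a, b) |-> T becomes addition, and
   both -ln (1 - x^2) and -ln x are convex in u (with u-derivatives x and -(1 - x^2)/(2x)).
   Adding up their tangent-line inequalities at a stationary point (a0, b0) shows that it
   is the unique minimum.  The stationarity equations give a0 = g^2 b0 and a quadratic
   equation for b0^2, whose root for g = 1 is sqrt 5 - 2. *)

Lemma strict_min_of_deriv_sign (f f' : R -> R) lo hi x0 :
  (forall c, lo < c < hi -> derivable_pt_lim f c (f' c)) ->
  (forall c, lo < c < x0 -> f' c < 0) ->
  (forall c, x0 < c < hi -> 0 < f' c) ->
  lo < x0 < hi -> forall x, lo < x < hi -> x <> x0 -> f x0 < f x.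
Proof.
  intros Hd Hneg Hpos Hx0 x Hx Hne.
  destruct (Rtotal_order x x0) as [Hlt | [Heq | Hgt]]; [| contradiction |].
  - destruct (MVT_cor2 f f' x x0 Hlt) as [c [Hfc Hc]].
    { intros c Hc; apply Hd; lra. }
    assert (f' c * (x0 - x) < 0) by (assert (f' c < 0) by (apply Hneg; lra); nra).
    lra.
  - destruct (MVT_cor2 f f' x0 x Hgt) as [c [Hfc Hc]].
    { intros c Hc; apply Hd; lra. }
    assert (0 < f' c * (x - x0)) by (assert (0 < f' c) by (apply Hpos; lra); nra).
    lra.
Qed.

Definition two_artanh (x : R) : R := ln ((1 + x) / (1 - x)).

Lemma two_artanh_add a b : -1 < a < 1 -> -1 < b < 1 ->
  two_artanh ((a + b) / (1 + a * b)) = two_artanh a + two_artanh b.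
Proof.
  intros Ha Hb.
  assert (0 < (1 + a) * (1 + b)) by (apply Rmult_lt_0_compat; lra).
  assert (0 < (1 - a) * (1 - b)) by (apply Rmult_lt_0_compat; lra).
  unfold two_artanh.
  rewrite <- ln_mult by (apply Rdiv_lt_0_compat; lra).
  f_equal. field. repeat split; lra.
Qed.

Definition tangent_gap (x0 x : R) : R :=
  (- ln (1 - x ^ 2) - x0 * two_artanh x) - (- ln (1 - x0 ^ 2) - x0 * two_artanh x0).

Lemma tangent_gap_pos x0 x : -1 < x0 < 1 -> -1 < x < 1 -> x <> x0 ->
  0 < tangent_gap x0 x.
Proof.
  intros Hx0 Hx Hne. unfold tangent_gap.
  enough (- ln (1 - x0 ^ 2) - x0 * two_artanh x0 < - ln (1 - x ^ 2) - x0 * two_artanh x)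
    by lra.
  apply (strict_min_of_deriv_sign (fun y => - ln (1 - y ^ 2) - x0 * two_artanh y)
           (fun y => 2 * (y - x0) / (1 - y ^ 2)) (-1) 1 x0); auto;
    intros c Hc; assert (0 < / (1 - c ^ 2)) by (apply Rinv_0_lt_compat; nra).
  - apply is_derive_Reals. unfold two_artanh. auto_derive.
    + repeat split; try nra; apply Rdiv_lt_0_compat; lra.
    + field. repeat split; try lra. nra.
  - unfold Rdiv. nra.
  - unfold Rdiv. nra.
Qed.

Lemma tangent_gap_ge0 x0 x : -1 < x0 < 1 -> -1 < x < 1 -> 0 <= tangent_gap x0 x.
Proof.
  intros Hx0 Hx. destruct (Req_dec x x0) as [-> | Hne].
  - unfold tangent_gap. lra.
  - left. now apply tangent_gap_pos.
Qed.

Lemma neg_ln_tangent T0 T : 0 < T0 < 1 -> 0 < T < 1 ->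
  let k := (1 - T0 ^ 2) / (2 * T0) in
  - ln T0 + k * two_artanh T0 <= - ln T + k * two_artanh T.
Proof.
  intros HT0 HT k.
  destruct (Req_dec T T0) as [-> | Hne]; [lra | left].
  assert (Hk : T0 ^ 2 + 2 * k * T0 - 1 = 0) by (unfold k; field; lra).
  assert (Hk0 : 0 < k) by (unfold k; apply Rdiv_lt_0_compat; nra).
  clearbody k.
  apply (strict_min_of_deriv_sign (fun x => - ln x + k * two_artanh x)
           (fun x => (x ^ 2 + 2 * k * x - 1) / (x * (1 - x ^ 2))) 0 1 T0); auto;
    intros c Hc; assert (0 < / (c * (1 - c ^ 2))) by (apply Rinv_0_lt_compat; nra);
    assert (Hfac : c ^ 2 + 2 * k * c - 1 = (c - T0) * (c + T0 + 2 * k)) by lra.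
  - apply is_derive_Reals. unfold two_artanh. auto_derive.
    + repeat split; try nra; apply Rdiv_lt_0_compat; lra.
    + field. repeat split; try lra. nra.
  - unfold Rdiv. rewrite Hfac.
    assert (0 < (T0 - c) * (c + T0 + 2 * k)) by (apply Rmult_lt_0_compat; lra). nra.
  - unfold Rdiv. rewrite Hfac.
    assert (0 < (c - T0) * (c + T0 + 2 * k)) by (apply Rmult_lt_0_compat; lra). nra.
Qed.

Lemma tanh_add_in_01 a b : 0 <= a < 1 -> 0 <= b < 1 -> 0 < a + b ->
  0 < (a + b) / (1 + a * b) < 1.
Proof.
  intros Ha Hb Hab. assert (0 <= a * b) by nra.
  split.
  - apply Rdiv_lt_0_compat; lra.
  - apply Rlt_div_l; nra.
Qed.

Definition radial_energy (g a b : R) : R :=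
  - 2 * g * ln ((a + b) / (1 + a * b)) - ln (1 - a ^ 2) - g ^ 2 * ln (1 - b ^ 2).

(* Stationarity of [radial_energy g] at (a0, b0); comparing the two partial derivatives
   gives a0 = g^2 b0. *)
Definition radial_critical (g a0 b0 : R) : Prop :=
  0 < a0 < 1 /\ 0 < b0 < 1 /\ a0 = g ^ 2 * b0 /\
  g * ((1 - a0 ^ 2) * (1 - b0 ^ 2)) = a0 * (1 + a0 * b0) * (a0 + b0).

Section RadialMinimum.

Variables g a0 b0 : R.
Hypothesis g_pos : 0 < g.
Hypothesis critical : radial_critical g a0 b0.

Lemma radial_energy_gap a b : 0 <= a < 1 -> 0 <= b < 1 -> 0 < a + b ->
  tangent_gap a0 a + g ^ 2 * tangent_gap b0 b
  <= radial_energy g a b - radial_energy g a0 b0.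
Proof.
  intros Ha Hb Hab.
  destruct critical as [Ha0 [Hb0 [Hab0 Hcrit]]].
  set (T0 := (a0 + b0) / (1 + a0 * b0)).
  set (T := (a + b) / (1 + a * b)).
  assert (HT0 : 0 < T0 < 1) by (apply tanh_add_in_01; lra).
  assert (HT : 0 < T < 1) by (apply tanh_add_in_01; lra).
  pose proof (neg_ln_tangent T0 T HT0 HT) as Htan; cbv zeta in Htan.
  set (k := (1 - T0 ^ 2) / (2 * T0)) in Htan.
  assert (Hk : 2 * g * k = a0).
  { transitivity (g * ((1 - a0 ^ 2) * (1 - b0 ^ 2)) / ((1 + a0 * b0) * (a0 + b0))).
    - unfold k, T0. field. split; nra.
    - rewrite Hcrit. field. split; nra. }
  assert (HL0 : two_artanh T0 = two_artanh a0 + two_artanh b0) by (apply two_artanh_add; lra).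
  assert (HL : two_artanh T = two_artanh a + two_artanh b) by (apply two_artanh_add; lra).
  rewrite HL0, HL in Htan.
  set (La0 := two_artanh a0) in *. set (Lb0 := two_artanh b0) in *.
  set (La := two_artanh a) in *. set (Lb := two_artanh b) in *.
  assert (Hscaled : - 2 * g * ln T0 + a0 * (La0 + Lb0) <= - 2 * g * ln T + a0 * (La + Lb)).
  { rewrite <- Hk.
    replace (- 2 * g * ln T0 + 2 * g * k * (La0 + Lb0))
      with (2 * g * (- ln T0 + k * (La0 + Lb0))) by ring.
    replace (- 2 * g * ln T + 2 * g * k * (La + Lb))
      with (2 * g * (- ln T + k * (La + Lb))) by ring.
    apply Rmult_le_compat_l; lra. }
  assert (Hgap_b : g ^ 2 * tangent_gap b0 b
                   = g ^ 2 * (- ln (1 - b ^ 2) + ln (1 - b0 ^ 2)) + a0 * (Lb0 - Lb)).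
  { unfold tangent_gap. fold Lb Lb0. rewrite Hab0. ring. }
  rewrite Hgap_b. unfold tangent_gap, radial_energy. fold T T0 La La0. lra.
Qed.

Lemma radial_energy_min a b : 0 <= a < 1 -> 0 <= b < 1 -> 0 < a + b ->
  radial_energy g a0 b0 <= radial_energy g a b /\
  (radial_energy g a b <= radial_energy g a0 b0 -> a = a0 /\ b = b0).
Proof.
  intros Ha Hb Hab.
  destruct critical as [Ha0 [Hb0 _]].
  pose proof (radial_energy_gap a b Ha Hb Hab) as Hgap.
  assert (Hg2 : 0 < g ^ 2) by (apply pow_lt; lra).
  pose proof (tangent_gap_ge0 a0 a ltac:(lra) ltac:(lra)).
  pose proof (tangent_gap_ge0 b0 b ltac:(lra) ltac:(lra)).
  assert (0 <= g ^ 2 * tangent_gap b0 b) by (apply Rmult_le_pos; lra).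
  split; [lra |].
  intros Hle.
  destruct (Req_dec a a0) as [Ea | Na].
  - split; [exact Ea |].
    destruct (Req_dec b b0) as [Eb | Nb]; [exact Eb | exfalso].
    pose proof (tangent_gap_pos b0 b ltac:(lra) ltac:(lra) Nb).
    assert (0 < g ^ 2 * tangent_gap b0 b) by (apply Rmult_lt_0_compat; lra).
    lra.
  - exfalso. pose proof (tangent_gap_pos a0 a ltac:(lra) ltac:(lra) Na). lra.
Qed.

End RadialMinimum.

Definition pos_root (A B : R) : R := (- B + sqrt (B ^ 2 + 4 * A)) / (2 * A).

Lemma pos_root_spec A B : 0 < A ->
  0 < pos_root A B /\ A * pos_root A B ^ 2 + B * pos_root A B = 1.
Proof.
  intros HA.
  assert (HD : 0 <= B ^ 2 + 4 * A) by nra.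
  pose proof (pow2_sqrt _ HD) as Hsq.
  pose proof (sqrt_pos (B ^ 2 + 4 * A)).
  unfold pos_root. set (r := sqrt (B ^ 2 + 4 * A)) in *. split.
  - apply Rdiv_lt_0_compat; [| lra].
    apply Rnot_le_lt. intro Hle. nra.
  - field_simplify; [| lra]. rewrite Hsq. field. lra.
Qed.

(* b0 = crit_b g is the positive root of the stationarity equations after
   eliminating a0 = g^2 b0; s = b0^2 solves g^3 (1 - g + g^2) s^2 + (1 + g + g^3 + g^4) s = 1. *)
Definition crit_b (g : R) : R :=
  sqrt (pos_root (g ^ 3 * (1 - g + g ^ 2)) (1 + g + g ^ 3 + g ^ 4)).

Definition crit_a (g : R) : R := g ^ 2 * crit_b g.

Lemma crit_radii_critical g : 0 < g -> radial_critical g (crit_a g) (crit_b g).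
Proof.
  intros Hg.
  set (A := g ^ 3 * (1 - g + g ^ 2)). set (B := 1 + g + g ^ 3 + g ^ 4).
  assert (HA : 0 < A) by (unfold A; apply Rmult_lt_0_compat; [apply pow_lt |]; nra).
  assert (HB : 1 < B) by (unfold B; pose proof (pow_lt g 3 Hg); pose proof (pow_lt g 4 Hg); lra).
  destruct (pos_root_spec A B HA) as [Hs0 Hroot].
  set (s := pos_root A B) in *.
  assert (Hs1 : s < 1) by (apply Rnot_le_lt; intro; nra).
  assert (Hfac : (1 - g ^ 4 * s) * (1 - s) = g * (1 + g ^ 2) * s * (1 + g ^ 2 * s))
    by (unfold A, B in Hroot; nra).
  assert (Hgs : g ^ 4 * s < 1).
  { assert (0 < g * (1 + g ^ 2) * s * (1 + g ^ 2 * s)).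
    { assert (0 < g * (1 + g ^ 2)) by nra.
      assert (0 < 1 + g ^ 2 * s) by nra.
      apply Rmult_lt_0_compat; [apply Rmult_lt_0_compat |]; lra. }
    nra. }
  assert (Hb : crit_b g = sqrt s) by reflexivity.
  assert (Hb2 : crit_b g ^ 2 = s) by (rewrite Hb; apply pow2_sqrt; lra).
  assert (Hb0 : 0 < crit_b g) by (rewrite Hb; apply sqrt_lt_R0; lra).
  assert (Hb1 : crit_b g < 1) by (rewrite Hb, <- sqrt_1; apply sqrt_lt_1; lra).
  assert (Ha2 : crit_a g ^ 2 = g ^ 4 * s) by (unfold crit_a; rewrite <- Hb2; ring).
  assert (Ha0 : 0 < crit_a g) by (unfold crit_a; apply Rmult_lt_0_compat; [apply pow_lt |]; lra).
  assert (Ha1 : crit_a g < 1) by (assert (crit_a g ^ 2 < 1) by lra; nra).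
  split; [lra | split; [lra | split; [reflexivity |]]].
  assert (Hid : g * ((1 - crit_a g ^ 2) * (1 - crit_b g ^ 2))
                - crit_a g * (1 + crit_a g * crit_b g) * (crit_a g + crit_b g)
                = - g * (A * (crit_b g ^ 2) ^ 2 + B * crit_b g ^ 2 - 1))
    by (unfold crit_a, A, B; ring).
  assert (Hq : A * (crit_b g ^ 2) ^ 2 + B * crit_b g ^ 2 - 1 = 0) by (rewrite Hb2; lra).
  rewrite Hq, Rmult_0_r in Hid. lra.
Qed.

Lemma crit_b_one : crit_b 1 = sqrt (sqrt 5 - 2).
Proof.
  unfold crit_b, pos_root. f_equal.
  replace ((1 + 1 + 1 ^ 3 + 1 ^ 4) ^ 2 + 4 * (1 ^ 3 * (1 - 1 + 1 ^ 2))) with (2 * 2 * 5) by ring.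
  rewrite sqrt_mult, sqrt_square by lra.
  field.
Qed.

Lemma crit_a_one : crit_a 1 = sqrt (sqrt 5 - 2).
Proof. unfold crit_a. rewrite crit_b_one. ring. Qed.

Definition nsq (P : pt) : R := fst P ^ 2 + snd P ^ 2.
Definition dot (P Q : pt) : R := fst P * fst Q + snd P * snd Q.

(* [|Q|^2 |P - Q/|Q|^2|^2], a polynomial in P and Q (equal to 1 at Q = 0). *)
Definition inv_dist_sq (P Q : pt) : R := nsq (psub P Q) + (1 - nsq P) * (1 - nsq Q).

Lemma nsq_ge0 P : 0 <= nsq P.
Proof. unfold nsq. nra. Qed.

Lemma nsq_pos P : fst P <> 0 \/ snd P <> 0 -> 0 < nsq P.
Proof.
  unfold nsq. intros [H | H]; [pose proof (pow2_gt_0 _ H) | pose proof (pow2_gt_0 _ H)];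
    pose proof (pow2_ge_0 (fst P)); pose proof (pow2_ge_0 (snd P)); lra.
Qed.

Lemma nsq_psub_pos P Q : P <> Q -> 0 < nsq (psub P Q).
Proof.
  intros Hne. apply nsq_pos. destruct P as [x1 x2], Q as [y1 y2]; simpl.
  destruct (Req_dec x1 y1), (Req_dec x2 y2); [subst; contradiction | right | left | left]; lra.
Qed.

Lemma norm2_sqr P : norm2 P ^ 2 = nsq P.
Proof. apply pow2_sqrt, nsq_ge0. Qed.

Lemma inD_nsq P : inD P -> nsq P < 1.
Proof.
  unfold inD. intros H. rewrite <- norm2_sqr.
  pose proof (sqrt_pos (nsq P)). unfold norm2 in *. fold (nsq P) in *. nra.
Qed.

Lemma ln_norm2 P : 0 < nsq P -> ln (norm2 P) = ln (nsq P) / 2.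
Proof.
  intros H. rewrite <- (norm2_sqr P).
  rewrite ln_pow by (apply sqrt_lt_R0; exact H). change (INR 2) with 2. field.
Qed.

Lemma inv_dist_sq_pos P Q : nsq P < 1 -> nsq Q < 1 -> 0 < inv_dist_sq P Q.
Proof.
  intros HP HQ. unfold inv_dist_sq.
  pose proof (nsq_ge0 (psub P Q)).
  assert (0 < (1 - nsq P) * (1 - nsq Q)) by (apply Rmult_lt_0_compat; lra).
  lra.
Qed.

Lemma h0_eq P Q : 0 < nsq Q -> 0 < inv_dist_sq P Q ->
  h0 P Q = - / (4 * PI) * ln (inv_dist_sq P Q).
Proof.
  intros HQ HI. pose proof PI_RGT_0.
  assert (Hrefl : nsq (psub P (pscale (/ nsq Q) Q)) = inv_dist_sq P Q / nsq Q).
  { unfold inv_dist_sq, nsq, psub, pscale in *; simpl in *. field. lra. }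
  assert (0 < inv_dist_sq P Q / nsq Q) by (apply Rdiv_lt_0_compat; lra).
  unfold h0. rewrite norm2_sqr, !ln_norm2, Hrefl, ln_div by (try rewrite Hrefl; lra).
  field. lra.
Qed.

Lemma h_eq P Q : nsq P < 1 -> nsq Q < 1 -> h P Q = - / (4 * PI) * ln (inv_dist_sq P Q).
Proof.
  intros HP HQ. pose proof (inv_dist_sq_pos P Q HP HQ) as HI.
  unfold h. destruct (Req_EM_T (fst Q) 0) as [E1 | E1];
    [destruct (Req_EM_T (snd Q) 0) as [E2 | E2] |].
  - replace (inv_dist_sq P Q) with 1 by
      (destruct P, Q; unfold inv_dist_sq, nsq, psub in *; simpl in *; subst; ring).
    rewrite ln_1. ring.
  - apply h0_eq; [apply nsq_pos; right |]; assumption.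
  - apply h0_eq; [apply nsq_pos; left |]; assumption.
Qed.

Lemma h_diag P : nsq P < 1 -> h P P = - / (2 * PI) * ln (1 - nsq P).
Proof.
  intros HP. pose proof PI_RGT_0.
  rewrite h_eq by exact HP.
  replace (inv_dist_sq P P) with ((1 - nsq P) ^ 2)
    by (unfold inv_dist_sq, nsq, psub; simpl; ring).
  rewrite ln_pow by lra. change (INR 2) with 2. field. lra.
Qed.

Lemma G_eq P Q : nsq P < 1 -> nsq Q < 1 -> P <> Q ->
  G P Q = / (4 * PI) * ln (inv_dist_sq P Q / nsq (psub P Q)).
Proof.
  intros HP HQ Hne. pose proof PI_RGT_0.
  pose proof (nsq_psub_pos P Q Hne) as Hd. pose proof (inv_dist_sq_pos P Q HP HQ).
  unfold G. rewrite h_eq by assumption.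
  rewrite ln_Rinv, ln_norm2, ln_div by (try apply sqrt_lt_R0; assumption).
  field. lra.
Qed.

Definition energy (g : R) (P Q : pt) : R :=
  g * ln (inv_dist_sq P Q / nsq (psub P Q)) - ln (1 - nsq P) - g ^ 2 * ln (1 - nsq Q).

Lemma H2_energy k1 k2 P Q : 0 < k1 -> inD P -> inD Q -> P <> Q ->
  H2 k1 k2 P Q = k1 ^ 2 / (2 * PI) * energy (- k2 / k1) P Q.
Proof.
  intros Hk HP HQ Hne. apply inD_nsq in HP, HQ. pose proof PI_RGT_0.
  unfold H2, energy. rewrite G_eq, !h_diag by assumption.
  field. lra.
Qed.

Lemma nsq_psub P Q : nsq (psub P Q) = nsq P + nsq Q - 2 * dot P Q.
Proof. unfold nsq, dot, psub; simpl; ring. Qed.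

Lemma neg_norm_mul_le_dot P Q : - (norm2 P * norm2 Q) <= dot P Q.
Proof.
  assert (Hlagrange : (norm2 P * norm2 Q) ^ 2 = dot P Q ^ 2 + (fst P * snd Q - snd P * fst Q) ^ 2).
  { rewrite Rpow_mult_distr, !norm2_sqr. unfold nsq, dot. ring. }
  pose proof (pow2_ge_0 (fst P * snd Q - snd P * fst Q)).
  assert (0 <= norm2 P * norm2 Q) by (apply Rmult_le_pos; apply sqrt_pos).
  apply Rnot_lt_le. intros Hlt. nra.
Qed.

Lemma norm2_add_pos P Q : P <> Q -> 0 < norm2 P + norm2 Q.
Proof.
  intros Hne.
  pose proof (nsq_psub_pos P Q Hne) as Hd. rewrite nsq_psub, <- !norm2_sqr in Hd.
  pose proof (neg_norm_mul_le_dot P Q).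
  assert (0 <= norm2 P) by apply sqrt_pos. assert (0 <= norm2 Q) by apply sqrt_pos.
  apply Rnot_le_lt. intros Hle.
  assert (Ea : norm2 P = 0) by lra. assert (Eb : norm2 Q = 0) by lra.
  rewrite Ea, Eb in *. lra.
Qed.

Lemma radial_energy_eq g a b : 0 <= a -> 0 <= b -> 0 < a + b ->
  radial_energy g a b
  = g * ln (((a + b) ^ 2 + (1 - a ^ 2) * (1 - b ^ 2)) / (a + b) ^ 2)
    - ln (1 - a ^ 2) - g ^ 2 * ln (1 - b ^ 2).
Proof.
  intros Ha Hb Hab. assert (0 <= a * b) by nra.
  assert (HT : 0 < (a + b) / (1 + a * b)) by (apply Rdiv_lt_0_compat; lra).
  replace (((a + b) ^ 2 + (1 - a ^ 2) * (1 - b ^ 2)) / (a + b) ^ 2)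
    with (/ ((a + b) / (1 + a * b)) ^ 2) by (field; lra).
  rewrite ln_Rinv, ln_pow by (try apply pow_lt; lra).
  unfold radial_energy. change (INR 2) with 2. ring.
Qed.

Lemma ln_shift_ratio_lt c x y : 0 < c -> 0 < x -> x < y ->
  ln ((y + c) / y) < ln ((x + c) / x).
Proof.
  intros Hc Hx Hxy. apply ln_increasing.
  - apply Rdiv_lt_0_compat; lra.
  - replace ((y + c) / y) with (1 + c / y) by (field; lra).
    replace ((x + c) / x) with (1 + c / x) by (field; lra).
    apply Rplus_lt_compat_l, Rmult_lt_compat_l; [lra |].
    apply Rinv_lt_contravar; nra.
Qed.

(* For fixed radii the energy only depends on |P - Q| <= |P| + |Q|, decreasingly. *)
Lemma radial_le_energy g P Q : 0 < g -> nsq P < 1 -> nsq Q < 1 -> P <> Q ->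
  radial_energy g (norm2 P) (norm2 Q) <= energy g P Q /\
  (energy g P Q <= radial_energy g (norm2 P) (norm2 Q) -> dot P Q = - (norm2 P * norm2 Q)).
Proof.
  intros Hg HP HQ Hne.
  set (a := norm2 P). set (b := norm2 Q).
  assert (Ha : 0 <= a) by apply sqrt_pos. assert (Hb : 0 <= b) by apply sqrt_pos.
  assert (Ha2 : nsq P = a ^ 2) by (symmetry; apply norm2_sqr).
  assert (Hb2 : nsq Q = b ^ 2) by (symmetry; apply norm2_sqr).
  pose proof (nsq_psub_pos P Q Hne) as Hd.
  assert (Hdist : (a + b) ^ 2 - nsq (psub P Q) = 2 * (dot P Q + a * b))
    by (rewrite nsq_psub, Ha2, Hb2; ring).
  pose proof (neg_norm_mul_le_dot P Q) as Hdot. fold a b in Hdot.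
  pose proof (norm2_add_pos P Q Hne) as Hab. fold a b in Hab.
  assert (Hc : 0 < (1 - a ^ 2) * (1 - b ^ 2)) by (apply Rmult_lt_0_compat; lra).
  unfold energy, inv_dist_sq. rewrite radial_energy_eq by assumption. rewrite Ha2, Hb2.
  destruct Hdot as [Hlt | Heq].
  - pose proof (ln_shift_ratio_lt _ _ ((a + b) ^ 2) Hc Hd ltac:(lra)).
    assert (Hmul : g * ln (((a + b) ^ 2 + (1 - a ^ 2) * (1 - b ^ 2)) / (a + b) ^ 2)
                   < g * ln ((nsq (psub P Q) + (1 - a ^ 2) * (1 - b ^ 2)) / nsq (psub P Q)))
      by (apply Rmult_lt_compat_l; assumption).
    split; intros; lra.
  - replace (nsq (psub P Q)) with ((a + b) ^ 2) by lra. split; [lra | easy].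
Qed.

Lemma unit_circle_angle c s : c ^ 2 + s ^ 2 = 1 ->
  exists t, 0 <= t < 2 * PI /\ cos t = c /\ sin t = s.
Proof.
  intros Hcs. pose proof PI_RGT_0.
  assert (Hc : -1 <= c <= 1) by (split; nra).
  pose proof (acos_bound c).
  assert (Hsin : sin (acos c) = Rabs s).
  { rewrite sin_acos by exact Hc. rewrite <- sqrt_Rsqr_abs. f_equal. unfold Rsqr. lra. }
  destruct (Rle_or_lt 0 s) as [Hs | Hs].
  - exists (acos c). rewrite cos_acos, Hsin, Rabs_pos_eq by assumption. repeat split; lra.
  - exists (2 * PI - acos c).
    assert (acos c <> 0).
    { intros Hzero. assert (c = 1) by (rewrite <- (cos_acos c), Hzero by exact Hc; apply cos_0).
      subst c. nra. }
    rewrite cos_minus, sin_minus, cos_2PI, sin_2PI, cos_acos, Hsin, Rabs_left by assumption.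
    repeat split; lra.
Qed.

Lemma norm2_polar r t : norm2 (pscale r (cos t, sin t)) = Rabs r.
Proof.
  unfold norm2, pscale; simpl. rewrite <- sqrt_Rsqr_abs. f_equal.
  pose proof (sin2_cos2 t). unfold Rsqr in *. nra.
Qed.

Lemma polar_form P r : norm2 P = r -> 0 < r ->
  exists t, 0 <= t < 2 * PI /\ P = pscale r (cos t, sin t).
Proof.
  intros HP Hr. destruct P as [x y].
  assert (Hn : x ^ 2 + y ^ 2 = r ^ 2) by (rewrite <- HP; symmetry; apply (norm2_sqr (x, y))).
  destruct (unit_circle_angle (x / r) (y / r)) as [t [Ht [Hcos Hsin]]].
  { field_simplify; [| lra]. rewrite Hn. field. lra. }
  exists t. split; [exact Ht |].
  unfold pscale; simpl. rewrite Hcos, Hsin. f_equal; field; lra.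
Qed.

Lemma anti_aligned_scale P Q a b : norm2 P = a -> norm2 Q = b -> 0 < a ->
  dot P Q = - (a * b) -> Q = pscale (- b / a) P.
Proof.
  intros HP HQ Ha Hd.
  pose proof (norm2_sqr P) as HP2. pose proof (norm2_sqr Q) as HQ2.
  rewrite HP in HP2. rewrite HQ in HQ2.
  destruct P as [x1 x2], Q as [y1 y2]. unfold nsq, dot, pscale in *; cbn [fst snd] in *.
  assert (Hsum : (b * x1 + a * y1) ^ 2 + (b * x2 + a * y2) ^ 2 = 0).
  { transitivity (b ^ 2 * (x1 ^ 2 + x2 ^ 2) + a ^ 2 * (y1 ^ 2 + y2 ^ 2)
                  + 2 * a * b * (x1 * y1 + x2 * y2)); [ring |].
    rewrite <- HP2, <- HQ2, Hd. ring. }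
  rewrite <- !Rsqr_pow2 in Hsum. apply Rplus_sqr_eq_0 in Hsum as [E1 E2].
  f_equal; field_simplify_eq; lra.
Qed.

Section Minimizers.

Variable g : R.
Hypothesis g_pos : 0 < g.

Lemma polar_pair_energy t :
  let P := pscale (crit_a g) (cos t, sin t) in
  let Q := pscale (- crit_b g) (cos t, sin t) in
  inD P /\ inD Q /\ P <> Q /\ energy g P Q = radial_energy g (crit_a g) (crit_b g).
Proof.
  intros P Q.
  destruct (crit_radii_critical g g_pos) as [Ha [Hb _]].
  assert (NP : norm2 P = crit_a g) by (unfold P; rewrite norm2_polar; apply Rabs_pos_eq; lra).
  assert (NQ : norm2 Q = crit_b g)
    by (unfold Q; rewrite norm2_polar, Rabs_Ropp; apply Rabs_pos_eq; lra).
  pose proof (sin2_cos2 t) as Hsc. unfold Rsqr in Hsc.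
  split; [unfold inD; lra |]. split; [unfold inD; lra |]. split.
  - unfold P, Q, pscale. intros Heq. injection Heq as E1 E2.
    assert (cos t = 0) by nra. assert (sin t = 0) by nra. nra.
  - unfold energy, inv_dist_sq.
    rewrite radial_energy_eq by lra. rewrite <- (norm2_sqr P), <- (norm2_sqr Q), NP, NQ.
    replace (nsq (psub P Q)) with ((crit_a g + crit_b g) ^ 2)
      by (unfold nsq, psub, P, Q, pscale; cbn [fst snd];
          transitivity ((crit_a g + crit_b g) ^ 2 * (sin t * sin t + cos t * cos t));
          [rewrite Hsc | ]; ring).
    reflexivity.
Qed.

Lemma energy_min P Q : inD P -> inD Q -> P <> Q ->
  radial_energy g (crit_a g) (crit_b g) <= energy g P Q /\
  (energy g P Q <= radial_energy g (crit_a g) (crit_b g) ->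
   exists t, 0 <= t < 2 * PI /\
     P = pscale (crit_a g) (cos t, sin t) /\ Q = pscale (- crit_b g) (cos t, sin t)).
Proof.
  intros HP HQ Hne.
  pose proof (crit_radii_critical g g_pos) as Hcrit.
  destruct (crit_radii_critical g g_pos) as [Ha [Hb _]].
  destruct (radial_le_energy g P Q g_pos (inD_nsq P HP) (inD_nsq Q HQ) Hne) as [Hradial Hdot].
  assert (0 <= norm2 P) by apply sqrt_pos. assert (0 <= norm2 Q) by apply sqrt_pos.
  destruct (radial_energy_min g _ _ g_pos Hcrit (norm2 P) (norm2 Q)
              ltac:(unfold inD in HP; lra) ltac:(unfold inD in HQ; lra) (norm2_add_pos P Q Hne))
    as [Hmin Hunique].
  split; [lra |].
  intros Hle. destruct (Hunique ltac:(lra)) as [NP NQ].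
  destruct (polar_form P (crit_a g) NP ltac:(lra)) as [t [Ht EP]].
  exists t. split; [exact Ht | split; [exact EP |]].
  rewrite NP, NQ in Hdot.
  rewrite (anti_aligned_scale P Q (crit_a g) (crit_b g) NP NQ ltac:(lra) ltac:(apply Hdot; lra)), EP.
  unfold pscale; cbn [fst snd]. f_equal; field; lra.
Qed.

End Minimizers.

Theorem propositionA1 :
  exists p q : R -> R,
    (forall gamma : R, 0 < gamma ->
       0 < p gamma < 1 /\ -1 < q gamma < 0) /\
    (forall k1 k2 : R, 0 < k1 -> k2 < 0 ->
       let gamma := - k2 / k1 in
       forall P Q : pt,
         is_min_point k1 k2 P Q <->
         (inD P /\ inD Q /\
          exists theta : R, 0 <= theta < 2 * PI /\
            P = pscale (p gamma) (cos theta, sin theta) /\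
            Q = pscale (q gamma) (cos theta, sin theta))) /\
    p 1 = sqrt (sqrt 5 - 2) /\ q 1 = - sqrt (sqrt 5 - 2).
Proof.
  exists crit_a, (fun g => - crit_b g).
  split; [| split; [| split]].
  - intros g Hg. destruct (crit_radii_critical g Hg) as [Ha [Hb _]]. lra.
  - intros k1 k2 Hk1 Hk2 g P Q.
    assert (Hg : 0 < g) by (apply Rdiv_lt_0_compat; lra).
    assert (Hscale : 0 < k1 ^ 2 / (2 * PI))
      by (pose proof PI_RGT_0; apply Rdiv_lt_0_compat; nra).
    split.
    + intros [HP [HQ [Hne Hmin]]].
      destruct (polar_pair_energy g Hg 0) as [HP0 [HQ0 [Hne0 HE0]]].
      specialize (Hmin _ _ HP0 HQ0 Hne0).
      rewrite !H2_energy in Hmin by assumption.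
      apply Rmult_le_reg_l in Hmin; [| exact Hscale].
      split; [exact HP | split; [exact HQ |]].
      apply (energy_min g Hg P Q HP HQ Hne). rewrite <- HE0. exact Hmin.
    + intros [HP [HQ [t [Ht [-> ->]]]]].
      destruct (polar_pair_energy g Hg t) as [_ [_ [Hne HE]]].
      split; [exact HP | split; [exact HQ | split; [exact Hne |]]].
      intros P' Q' HP' HQ' Hne'.
      rewrite !H2_energy by assumption.
      apply Rmult_le_compat_l; [lra |].
      fold g. rewrite HE. apply (energy_min g Hg P' Q' HP' HQ' Hne').
  - exact crit_a_one.
  - rewrite crit_b_one. reflexivity.
Qed.
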